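(* Let $\mathcal{M}$ be the set of compactly supported probability distributions on $\mathbb{R}$ (identified with their cdfs). A mapping $T:\mathcal{M}\to\mathcal{M}$ satisfies $T\circ T^u=T^u\circ T$ for every utility function $u$ if and only if $T=T_d$ for some distortion function $d$.
   Context: Increasing means non-decreasing. A distortion function is an increasing function $d:[0,1]\to[0,1]$ with $d(0)=0$ and $d(1)=1$ (not necessarily continuous). A utility function is an increasing continuous function $u:\mathbb{R}\to\mathbb{R}$. For a distortion function $d$, the probability distortion $T_d:\mathcal{M}\to\mathcal{M}$ is defined by $T_d(F)(x)=\lim_{y\downarrow x} d(F(y))$ for $x\in\mathbb{R}$. For a utility function $u$, the utility transform $T^u:\mathcal{M}\to\mathcal{M}$ maps the distribution of a random variable $X$ to the distribution of $u(X)$, i.e. $T^u(F)=F\circ u^{-1}$ with $F$ viewed as a measure. *)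

From HB Require Import structures.
From mathcomp Require Import all_boot all_order all_algebra.
From mathcomp Require Import all_classical all_reals all_analysis.
Set Implicit Arguments. Unset Strict Implicit. Unset Printing Implicit Defensive.
Import Order.TTheory GRing.Theory Num.Theory.
Import numFieldNormedType.Exports.
Local Open Scope classical_set_scope.
Local Open Scope ring_scope.

Section Defs.
Variable R : realType.

Definition in_M (F : R -> R) : Prop :=
  {homo F : x y / x <= y} /\
  (forall x, F @ x^'+ --> F x) /\
  exists a b : R, (forall x, x < a -> F x = 0) /\ (forall x, b <= x -> F x = 1).

Definition utility (u : R -> R) : Prop :=
  {homo u : x y / x <= y} /\ continuous u.

(* distortion function d : [0,1] -> [0,1], increasing, d 0 = 0, d 1 = 1
   (values outside [0,1] are irrelevant) *)
Definition distortion (d : R -> R) : Prop :=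
  {in `[0, 1] &, {homo d : x y / x <= y}} /\
  (forall p, p \in `[0, 1] -> d p \in `[0, 1]) /\
  d 0 = 0 /\ d 1 = 1.

Definition Td (d : R -> R) (F : R -> R) : R -> R :=
  fun x => lim ((d \o F) @ x^'+).

(* utility transform: cdf of u(X) when X has cdf F, i.e.
   x |-> P(u(X) <= x) = P(X \in u^{-1}(-oo, x]).  Since u is increasing and
   continuous, u^{-1}(-oo,x] is a closed down-set of R, whose F-probability is
   the supremum of F over it (0 if it is empty). *)
Definition Tu (u : R -> R) (F : R -> R) : R -> R :=
  fun x => sup ([set 0] `|` (F @` [set t | u t <= x])).

End Defs.

From HB Require Import structures.
From mathcomp Require Import all_boot all_order all_algebra.
From mathcomp Require Import all_classical all_reals all_analysis.
From mathcomp Require Import lra.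
Set Implicit Arguments. Unset Strict Implicit. Unset Printing Implicit Defensive.
Import Order.TTheory GRing.Theory Num.Theory.
Import numFieldNormedType.Exports.
Local Open Scope classical_set_scope.
Local Open Scope ring_scope.

(* If T commutes with every utility transform, put d(q) := T(G_q)(0), where G_q is the
   cdf with mass q at 0 and 1 - q at 1.  Given F and y, let F' be F with a flat unit gap
   inserted right of y.  A utility collapsing the gap maps F' back to F, while the ramp
   sending (-oo, y] to 0 and [y + 1, +oo) to 1 maps F' to G_(F y); commuting T with both
   gives T F z <= d (F y) <= T F y for z < y, hence T F x = lim_(y -> x+) d (F y) by right
   continuity of T F.  Conversely, a sublevel set of a utility u is empty, all of R, or a
   half-line (-oo, c]; accordingly, just right of each point, T^u F is 0, 1, or squeezed
   between values of F just right of c, and this is preserved by composing with d and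
   taking right limits. *)

Ltac case_ifs := repeat match goal with
  | |- context [if ?b then _ else _] => case: ifPn; rewrite -?leNgt -?ltNge => ?
  end.

Section RightLimits.
Variable R : realType.
Implicit Types (f u : R -> R) (t l : R).

Definition right_lim f t l := forall e : R, 0 < e ->
  exists2 d : R, 0 < d & forall y, t < y -> y < t + d -> `|f y - l| < e.

Lemma right_limP f t l : right_lim f t l <-> f @ t^'+ --> l.
Proof.
split=> [fl|/cvgrPdist_lt fl e e0].
- apply/cvgrPdist_lt => e /fl[d d0 fd].
  near=> y; rewrite distrC; apply: fd.
  + by near: y; exact: nbhs_right_gt.
  + by near: y; apply: nbhs_right_lt; rewrite ltrDl.
- have := fl e e0; rewrite near_withinE => /nbhs_ballP[d /= d0 fd].
  exists d => // y ty yd; rewrite distrC; apply: fd => //.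
  by rewrite /ball /= distrC ger0_norm ?subr_ge0 ?ltW //; lra.
Unshelve. all: by end_near. Qed.

Lemma right_lim_eventually_const f t l :
  (exists2 d : R, 0 < d & forall y, t < y -> y < t + d -> f y = l) ->
  right_lim f t l.
Proof. by move=> [d d0 fd] e e0; exists d => // y ty yd; rewrite fd // subrr normr0. Qed.

Lemma continuous_eps_delta u c : continuous u -> forall e : R, 0 < e ->
  exists2 d : R, 0 < d & forall s, `|c - s| < d -> `|u c - u s| < e.
Proof.
move=> uc e e0.
have /nbhs_ballP[d /= d0 ud] : \forall s \near c, `|u c - u s| < e.
  exact: (cvgrPdist_lt _ _).1 (uc c) e e0.
by exists d.
Qed.

End RightLimits.

Section Transforms.
Variable R : realType.
Implicit Types (F u : R -> R) (c t z : R).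

Lemma in_M_homo F : in_M F -> {homo F : x y / x <= y}.
Proof. by case. Qed.

Lemma in_M_right_lim F t : in_M F -> right_lim F t (F t).
Proof. by move=> [_ [Frc _]]; apply/right_limP. Qed.

Lemma in_M_bounds F t : in_M F -> 0 <= F t <= 1.
Proof.
move=> [Fhomo [_ [a [b [Fa Fb]]]]]; apply/andP; split.
- rewrite -(Fa (Num.min t (a - 1))); last by rewrite gt_min ltrBlDr ltrDl ltr01 orbT.
  by apply: Fhomo; rewrite ge_min lexx.
- rewrite -(Fb (Num.max t b)); last by rewrite le_max lexx orbT.
  by apply: Fhomo; rewrite le_max lexx.
Qed.

Lemma utility_sublevel u z : utility u ->
  [\/ forall t, z < u t, forall t, u t <= z | exists c, forall t, u t <= z <-> t <= c].
Proof.
move=> [uhomo ucont].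
have [[t0 ut0]|above] := pselect (exists t, u t <= z); last first.
  by apply: Or31 => t; rewrite ltNge; apply/negP => utz; apply: above; exists t.
have [[s0 us0]|below] := pselect (exists s, z < u s); last first.
  by apply: Or32 => t; rewrite leNgt; apply/negP => zut; apply: below; exists t.
apply: Or33; pose A := [set t | u t <= z].
have A_ub : ubound A s0.
  by move=> t; rewrite /A /= => utz; rewrite leNgt; apply/negP => /ltW/uhomo ?; lra.
have A_sup : has_sup A by split; [exists t0 | exists s0].
exists (sup A) => t; split=> [utz|tA]; first exact: sup_upper_bound.
apply: le_trans (uhomo _ _ tA) _; rewrite leNgt -subr_gt0; apply/negP => zuA.
have [d d0 ud] := continuous_eps_delta (sup A) ucont zuA.
have [s As sA] := sup_adherent d0 A_sup.
have sAle : s <= sup A by exact: sup_upper_bound.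
have := ud s; rewrite ger0_norm ?subr_ge0 // => /(_ ltac:(lra)).
by rewrite /A /= in As; rewrite ltr_distl; lra.
Qed.

Section Bounds.
Variables (F u : R -> R).
Hypothesis FM : in_M F.

Let Tu_set_ub z : ubound ([set 0] `|` (F @` [set t | u t <= z])) 1.
Proof. by move=> _ [->|[t _ <-]]; [exact: ler01 | case/andP: (in_M_bounds t FM)]. Qed.

Let Tu_set_has_ub z : has_ubound ([set 0] `|` (F @` [set t | u t <= z])).
Proof. by exists 1; apply: Tu_set_ub. Qed.

Lemma Tu_ge0 z : 0 <= Tu u F z.
Proof. by apply: (ub_le_sup (Tu_set_has_ub z)); left. Qed.

Lemma Tu_le1 z : Tu u F z <= 1.
Proof. apply: ge_sup; [by exists 0; left | exact: Tu_set_ub]. Qed.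

Lemma Tu_ge c z : u c <= z -> F c <= Tu u F z.
Proof. by move=> ucz; apply: (ub_le_sup (Tu_set_has_ub z)); right; exists c. Qed.

Lemma Tu_le c z : (forall t, u t <= z -> t <= c) -> Tu u F z <= F c.
Proof.
move=> utc; apply: ge_sup; first by exists 0; left.
move=> _ [->|[t /utc tc <-]]; last exact: in_M_homo.
by case/andP: (in_M_bounds c FM).
Qed.

Lemma Tu_eq0 z : (forall t, u t <= z -> F t = 0) -> Tu u F z = 0.
Proof.
move=> F0; apply/le_anti; rewrite Tu_ge0 andbT; apply: ge_sup; first by exists 0; left.
by move=> _ [->|[t /F0 -> <-]].
Qed.

Lemma Tu_eq c z : (forall t, u t <= z <-> t <= c) -> Tu u F z = F c.
Proof.
move=> utc; apply/le_anti/andP; split.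
- by apply: Tu_le => t /utc.
- by apply: Tu_ge; apply/utc.
Qed.

Lemma Tu_eq1 z : (forall t, u t <= z) -> Tu u F z = 1.
Proof.
move=> utz; apply/le_anti; rewrite Tu_le1 /=.
have [_ [_ [a [b [_ Fb]]]]] := FM.
by rewrite -(Fb b) // Tu_ge.
Qed.

End Bounds.

Lemma continuous_right_sublevel u c w d : continuous u -> u c < w -> 0 < d ->
  exists c1, [/\ c < c1, c1 < c + d & u c1 <= w].
Proof.
move=> ucont; rewrite -subr_gt0 => ucw d0.
have [eta eta0 ueta] := continuous_eps_delta c ucont ucw.
pose m := Num.min eta d.
have m0 : 0 < m by rewrite lt_min eta0.
have meta : m <= eta by rewrite ge_min lexx.
have md : m <= d by rewrite ge_min lexx orbT.
exists (c + m / 2); split; [lra | lra |].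
have := ueta (c + m / 2); rewrite opprD addrA subrr add0r normrN ger0_norm; last lra.
by move=> /(_ ltac:(lra)); rewrite ltr_distl; lra.
Qed.

Section RightLimitsOfTu.
Variables (F u phi : R -> R).
Hypotheses (FM : in_M F) (uU : utility u).
Hypothesis phi_homo : {in `[0, 1] &, {homo phi : x y / x <= y}}.

Lemma right_lim_Tu_empty z : (forall t, z < u t) -> right_lim (phi \o Tu u F) z (phi 0).
Proof.
move=> zu; have [_ [_ [a [b [Fa _]]]]] := FM.
apply: right_lim_eventually_const; exists (u a - z) => [|w zw wa /=]; first by rewrite subr_gt0.
rewrite Tu_eq0 // => t utw; apply: Fa; rewrite ltNge; apply/negP => /uU.1 ?; lra.
Qed.

Lemma right_lim_Tu_full z : (forall t, u t <= z) -> right_lim (phi \o Tu u F) z (phi 1).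
Proof.
move=> uz; apply: right_lim_eventually_const; exists 1 => // w zw _ /=.
by rewrite Tu_eq1 // => t; apply: le_trans (uz t) (ltW zw).
Qed.

Lemma right_lim_Tu z c L : (forall t, u t <= z <-> t <= c) ->
  right_lim (phi \o F) c L -> right_lim (phi \o Tu u F) z L.
Proof.
move=> utc FL e e0; have [d d0 Fd] := FL e e0; have [uhomo ucont] := uU.
pose c2 := c + d / 2.
have zuc2 : z < u c2 by rewrite ltNge; apply/negP => /utc; rewrite /c2; lra.
exists (u c2 - z) => [|w zw wc2]; first by rewrite subr_gt0.
have ucw : u c < w by apply: le_lt_trans zw; apply/utc.
have [c1 [cc1 c1d uc1w]] := continuous_right_sublevel ucont ucw d0.
have Tu_between : F c1 <= Tu u F w <= F c2.
  rewrite Tu_ge //=; apply: (Tu_le FM) => t utw.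
  by rewrite leNgt; apply/negP => /ltW/uhomo; lra.
have phi_between : phi (F c1) <= phi (Tu u F w) <= phi (F c2).
  case/andP: Tu_between => ? ?.
  by apply/andP; split; apply: phi_homo; rewrite ?in_itv /= ?Tu_ge0 ?Tu_le1 ?in_M_bounds.
have := Fd c1 cc1 c1d; have := Fd c2 ltac:(rewrite /c2; lra) ltac:(rewrite /c2; lra).
by rewrite /= !ltr_distl; lra.
Qed.

End RightLimitsOfTu.

Lemma Tu_in_M F u : in_M F -> utility u -> in_M (Tu u F).
Proof.
move=> FM uU; split; [|split].
- move=> z1 z2 z12; apply: ge_sup; first by exists 0; left.
  move=> _ [->|[t utz1 <-]]; first exact: Tu_ge0.
  by apply: Tu_ge => //; apply: le_trans utz1 z12.
- move=> z; apply/right_limP.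
  have id_homo : {in `[0, 1] &, {homo (@id R) : x y / x <= y}} by [].
  have [zu|uz|[c utc]] := utility_sublevel z uU.
  + rewrite (Tu_eq0 FM) => [|t utz]; first exact: (right_lim_Tu_empty id FM uU zu).
    by have := zu t; rewrite ltNge utz.
  + by rewrite (Tu_eq1 FM) //; exact: (right_lim_Tu_full id FM uz).
  + rewrite (Tu_eq FM utc).
    exact: (right_lim_Tu FM uU id_homo utc (in_M_right_lim c FM)).
- have [_ [_ [a [b [Fa Fb]]]]] := FM.
  exists (u a), (u b); split=> z zu.
  + by apply: (Tu_eq0 FM) => t utz; apply: Fa; rewrite ltNge; apply/negP => /uU.1 ?; lra.
  + by apply/le_anti; rewrite Tu_le1 //= -(Fb b) // Tu_ge.
Qed.

Lemma Td_right_lim d F c : distortion d -> in_M F -> right_lim (d \o F) c (Td d F c).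
Proof.
move=> [d_homo [d_range _]] FM; apply/right_limP.
have inI t : F t \in `[0, 1] by rewrite in_itv /= in_M_bounds.
apply: nondecreasing_at_right_is_cvgr; apply: nearW => ?.
- by move=> s t _ _ st /=; apply: d_homo; rewrite ?inI ?(in_M_homo FM).
- exists 0 => _ [t _ <-] /=.
  by have /andP[] := d_range _ (inI t); rewrite ?in_itv.
Qed.

Lemma commute_Td_Tu d u F : distortion d -> utility u -> in_M F -> in_M (Td d F) ->
  Td d (Tu u F) = Tu u (Td d F).
Proof.
move=> dD uU FM TdM; have [d_homo [_ [d0 d1]]] := dD.
apply/funext => z; apply: cvg_lim => //; apply/right_limP.
have [zu|uz|[c utc]] := utility_sublevel z uU.
- rewrite (Tu_eq0 TdM) => [|t utz]; first by rewrite -d0; exact: right_lim_Tu_empty.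
  by have := zu t; rewrite ltNge utz.
- by rewrite (Tu_eq1 TdM) // -d1; exact: right_lim_Tu_full.
- rewrite (Tu_eq TdM utc).
  exact: (right_lim_Tu FM uU d_homo utc (Td_right_lim c dD FM)).
Qed.

Lemma Tu_cst k F : in_M F -> Tu (fun=> k) F = fun z => if z < k then 0 else 1.
Proof.
move=> FM; apply/funext => z; case: ltP => [zk|kz].
- by apply: (Tu_eq0 FM) => t; rewrite leNgt zk.
- exact: (Tu_eq1 FM).
Qed.

Definition three_point_cdf (p q t : R) : R :=
  if t < 0 then 0 else if t < 1 then p else if t < 2 then q else 1.

Lemma three_point_cdf_in_M p q : 0 <= p -> p <= q -> q <= 1 -> in_M (three_point_cdf p q).
Proof.
rewrite /three_point_cdf => p0 pq q1; split; [|split].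
- by move=> s t st; case_ifs; lra.
- move=> t; apply/right_limP/right_lim_eventually_const.
  have [t0|t0] := ltP t 0; first by exists (- t) => [|y ty yt]; case_ifs; lra.
  have [t1|t1] := ltP t 1; first by exists (1 - t) => [|y ty yt]; case_ifs; lra.
  have [t2|t2] := ltP t 2; first by exists (2 - t) => [|y ty yt]; case_ifs; lra.
  by exists 1 => [|y ty yt]; case_ifs; lra.
- by exists 0, 2; split=> t ?; case_ifs; lra.
Qed.

(* The cdf of X + 1_(X > x) for X with cdf F. *)
Definition gap_cdf F x t : R :=
  if t <= x then F t else if t < x + 1 then F x else F (t - 1).

Lemma gap_cdf_in_M F x : in_M F -> in_M (gap_cdf F x).
Proof.
move=> FM; have [Fhomo [_ [a [b [Fa Fb]]]]] := FM; rewrite /gap_cdf; split; [|split].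
- by move=> s t st; case_ifs; apply: Fhomo; lra.
- move=> t; apply/right_limP.
  have [tx|xt] := ltP t x.
    move=> e e0; have [d d0 Fd] := in_M_right_lim t FM e0.
    exists (Num.min d (x - t)) => [|y ty]; first by rewrite lt_min d0 subr_gt0.
    by rewrite -ltrBlDl lt_min => /andP[yd yx]; case_ifs; try lra; apply: Fd; lra.
  have [tx1|x1t] := ltP t (x + 1).
    apply: right_lim_eventually_const; exists (x + 1 - t) => [|y ty yx1]; first lra.
    by case_ifs; try lra; rewrite (_ : t = x) //; lra.
  move=> e e0; have [d d0 Fd] := in_M_right_lim (t - 1) FM e0.
  by exists d => // y ty yd; case_ifs; try lra; apply: Fd; lra.
- by exists a, (b + 1); split=> t ?; case_ifs; first [apply: Fa | apply: Fb]; lra.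
Qed.

Definition collapse_gap x t : R := if t <= x then t else if t <= x + 1 then x else t - 1.

Definition ramp x t : R := if t <= x then 0 else if t <= x + 1 then t - x else 1.

Lemma nonexpansive_utility u :
  (forall s t, s <= t -> u s <= u t /\ u t - u s <= t - s) -> utility u.
Proof.
move=> uL; split=> [s t /uL[] //|c].
have uLip s t : `|u s - u t| <= `|s - t|.
  wlog st : s t / s <= t.
    by move=> H; have [/H //|/ltW/H] := leP s t; rewrite distrC (distrC s).
  by have [ust Lst] := uL _ _ st; rewrite distrC (distrC s) !ger0_norm ?subr_ge0.
apply/cvgrPdist_lt => e e0; apply/nbhs_ballP; exists e => // s.
by rewrite /ball /=; apply: le_lt_trans (uLip c s).
Qed.

Lemma collapse_gap_utility x : utility (collapse_gap x).
Proof. by apply: nonexpansive_utility => s t st; rewrite /collapse_gap; case_ifs; lra. Qed.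

Lemma ramp_utility x : utility (ramp x).
Proof. by apply: nonexpansive_utility => s t st; rewrite /ramp; case_ifs; lra. Qed.

Lemma cst_utility k : utility (fun=> k : R).
Proof. by split=> [s t _|]; [exact: lexx | exact: cst_continuous]. Qed.

Lemma Tu_collapse_gap F x : in_M F -> Tu (collapse_gap x) (gap_cdf F x) = F.
Proof.
move=> FM; have GM := gap_cdf_in_M x FM; apply/funext => z.
have [zx|xz] := ltP z x.
  rewrite (Tu_eq GM (c := z)) => [|t]; rewrite /gap_cdf /collapse_gap.
    by case_ifs => //; lra.
  by case_ifs; split; lra.
rewrite (Tu_eq GM (c := z + 1)) => [|t]; rewrite /gap_cdf /collapse_gap.
  by case_ifs; try lra; rewrite addrK.
by case_ifs; split; lra.
Qed.

Lemma Tu_ramp_gap F x : in_M F -> Tu (ramp x) (gap_cdf F x) = three_point_cdf (F x) 1.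
Proof.
move=> FM; have GM := gap_cdf_in_M x FM; apply/funext => z.
rewrite /three_point_cdf; case: ltP => z0.
  by apply: (Tu_eq0 GM) => t; rewrite /ramp; case_ifs; lra.
case: ltP => z1.
  rewrite (Tu_eq GM (c := x + z)) => [|t]; rewrite /gap_cdf /ramp.
    by case_ifs; try lra; rewrite (_ : z = 0) ?addr0; lra.
  by case_ifs; split; lra.
by rewrite if_same; apply: (Tu_eq1 GM) => t; rewrite /ramp; case_ifs; lra.
Qed.

Section CommutingTransform.
Variable T : (R -> R) -> R -> R.
Hypothesis TM : forall F, in_M F -> in_M (T F).
Hypothesis T_Tu : forall u, utility u -> forall F, in_M F -> T (Tu u F) = Tu u (T F).

Definition induced_distortion q := T (three_point_cdf q 1) 0.
Local Notation d := induced_distortion.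

Lemma T_fixes_point_mass k F : in_M F -> T (Tu (fun=> k) F) = Tu (fun=> k) F.
Proof. by move=> FM; rewrite (T_Tu (cst_utility k)) // (Tu_cst k (TM FM)) (Tu_cst k FM). Qed.

Lemma induced_distortion_sandwich F y z : in_M F -> z < y ->
  T F z <= d (F y) <= T F y.
Proof.
move=> FM zy; have GM := gap_cdf_in_M y FM; have /in_M_homo TG_homo := TM GM.
have dFy : d (F y) = T (gap_cdf F y) y.
  rewrite /d -(Tu_ramp_gap y FM) (T_Tu (ramp_utility y)) //.
  by apply: (Tu_eq (TM GM)) => t; rewrite /ramp; case_ifs; split; lra.
have TF w : T F w = Tu (collapse_gap y) (T (gap_cdf F y)) w.
  by rewrite -{1}(Tu_collapse_gap y FM) (T_Tu (collapse_gap_utility y)).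
have TFz : T F z = T (gap_cdf F y) z.
  rewrite TF (Tu_eq (TM GM) (c := z)) // => t.
  by rewrite /collapse_gap; case_ifs; split; lra.
have TFy : T F y = T (gap_cdf F y) (y + 1).
  rewrite TF (Tu_eq (TM GM) (c := y + 1)) // => t.
  by rewrite /collapse_gap; case_ifs; split; lra.
by rewrite dFy TFz TFy !TG_homo //; lra.
Qed.

Lemma induced_distortion_is_distortion : distortion d.
Proof.
split; [|split; [|split]].
- move=> p q; rewrite !in_itv /= => /andP[p0 p1] /andP[q0 q1] pq.
  have FM := three_point_cdf_in_M p0 pq q1.
  have /andP[_ dp] := induced_distortion_sandwich FM (ltrN10 R).
  have /andP[dq _] := induced_distortion_sandwich FM ltr01.
  move: dp dq; rewrite /three_point_cdf; case_ifs; lra.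
- move=> p; rewrite !in_itv /= => /andP[p0 p1].
  exact: in_M_bounds (TM (three_point_cdf_in_M p0 p1 (lexx 1))).
- have PM := three_point_cdf_in_M (lexx 0) ler01 (lexx 1).
  have dirac1 : three_point_cdf 0 1 = Tu (fun=> 1) (three_point_cdf 0 1).
    by rewrite (Tu_cst 1 PM); apply/funext => t; rewrite /three_point_cdf; case_ifs; lra.
  by rewrite /d {1}dirac1 T_fixes_point_mass // (Tu_cst 1 PM) /= ltr01.
- have PM := three_point_cdf_in_M ler01 (lexx 1) (lexx 1).
  have dirac0 : three_point_cdf 1 1 = Tu (fun=> 0) (three_point_cdf 1 1).
    by rewrite (Tu_cst 0 PM); apply/funext => t; rewrite /three_point_cdf; case_ifs; lra.
  by rewrite /d {1}dirac0 T_fixes_point_mass // (Tu_cst 0 PM) /= ltxx.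
Qed.

Lemma T_eq_Td F : in_M F -> T F = Td d F.
Proof.
move=> FM; apply/funext => x; apply/esym/cvg_lim => //; apply/right_limP => e e0.
have [delta delta0 TFd] := in_M_right_lim x (TM FM) e0.
exists delta => // y xy yd; have := TFd y xy yd.
by have := induced_distortion_sandwich FM xy; rewrite /= !ltr_distl; lra.
Qed.

End CommutingTransform.
End Transforms.

Theorem theorem1 (R : realType) (T : (R -> R) -> (R -> R))
  (TM : forall F : R -> R, in_M F -> in_M (T F)) :
  (forall u : R -> R, utility u ->
     forall F : R -> R, in_M F -> T (Tu u F) = Tu u (T F)) <->
  (exists d : R -> R, distortion d /\ forall F : R -> R, in_M F -> T F = Td d F).
Proof.
split=> [T_Tu | [d [dD T_Td]] u uU F FM].
- exists (induced_distortion T); split.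
  + exact: induced_distortion_is_distortion.
  + exact: T_eq_Td.
- have TdM : in_M (Td d F) by rewrite -(T_Td _ FM); exact: TM.
  by rewrite (T_Td _ (Tu_in_M FM uU)) (T_Td _ FM) commute_Td_Tu.
Qed.
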